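(* Let $\rho\in\{1/2,1\}$, let $s>0$ and $\eta>0$ be real numbers, let $q\in\mathbb{C}$, and let $\epsilon<1$ be real. Define the real cubic polynomial $$f(\gamma) = -\gamma^3\eta s^2 - \gamma^2\big[(1-\epsilon+\rho)s^2 + 2\eta s\big] + \gamma\big[2(\epsilon-1)s - s\rho + \rho|q|^2 - \eta\big] + (\epsilon-1).$$ If $f$ has positive roots, then it has exactly two of them (counted with multiplicity).
   Context: The polynomial $f$ satisfies $f(\gamma)=\gamma(1+\gamma s)^2\ell'(\gamma)$, where $\ell(\gamma) = -\rho\log(1+\gamma s) + \rho|q|^2/(\gamma^{-1}+s) + (\epsilon-1)\log\gamma - \eta\gamma$ for $\gamma>0$. Here $\rho=1/2$ corresponds to a real and $\rho=1$ to a complex signal model, $\epsilon$ is a gamma shape parameter and $\eta>0$ a gamma rate parameter. *)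

From mathcomp Require Import all_boot all_order all_algebra.
From mathcomp Require Import complex.
Set Implicit Arguments. Unset Strict Implicit. Unset Printing Implicit Defensive.
Import Order.TTheory GRing.Theory Num.Theory.
Local Open Scope ring_scope.

Definition cnorm2 (R : rcfType) (q : R[i]) : R :=
  (complex.Re q) ^+ 2 + (complex.Im q) ^+ 2.

Definition fpoly (R : rcfType) (rho s eta eps : R) (q : R[i]) : {poly R} :=
  (- (eta * s ^+ 2)) *: 'X^3
  - ((1 - eps + rho) * s ^+ 2 + 2 * eta * s) *: 'X^2
  + (2 * (eps - 1) * s - s * rho + rho * cnorm2 q - eta) *: 'X
  + (eps - 1)%:P.

Definition num_pos_roots (R : rcfType) (p : {poly R}) (n : nat) : Prop :=
  exists s : seq R,
    [/\ uniq s, (forall x, (x \in s) = (0 < x) && root p x)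
      & (\sum_(x <- s) mup x p)%N = n].

From mathcomp Require Import all_boot all_order all_algebra.
From mathcomp Require Import complex.
From mathcomp Require Import ring lra.
Import Order.TTheory GRing.Theory Num.Theory.
Local Open Scope ring_scope.

(* Only the signs of the leading and constant coefficients of f matter, and
   both are negative.  Dividing f by X - g for a positive root g leaves a
   quadratic whose leading and constant coefficients have opposite signs, so
   its discriminant is positive and its two real roots have a negative
   product.  Hence f = lead f * (X - b)(X - a)(X - g) with b < 0 < a, and the
   positive roots of f counted with multiplicity are a and g. *)

Section Cubic.

Variables (F : idomainType) (a b c d : F).
Hypothesis a_neq0 : a != 0.

Let cubic : {poly F} := a *: 'X^3 + b *: 'X^2 + c *: 'X + d%:P.

Lemma size_cubic : size cubic = 4%N.
Proof.
have size_scaleX k n : (size (k *: 'X^n : {poly F}) <= n.+1)%N.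
  by rewrite (leq_trans (size_scale_leq _ _)) // size_polyXn.
have size3 : size (a *: 'X^3 : {poly F}) = 4%N by rewrite size_scale ?size_polyXn.
have size32 : size (a *: 'X^3 + b *: 'X^2) = 4%N.
  by rewrite size_polyDl size3 // ltnS size_scaleX.
have size321 : size (a *: 'X^3 + b *: 'X^2 + c *: 'X) = 4%N.
  by rewrite size_polyDl size32 // (leq_ltn_trans (size_scaleX c 1)).
by rewrite /cubic size_polyDl size321 // (leq_ltn_trans (size_polyC_leq1 d)).
Qed.

Lemma lead_coef_cubic : lead_coef cubic = a.
Proof. by rewrite lead_coefE size_cubic /cubic !coefE /=; ring. Qed.

Lemma horner_cubic0 : cubic.[0] = d.
Proof. by rewrite /cubic !hornerE /= !(mulr0, mul0r, add0r). Qed.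

End Cubic.

Section PositiveRoots.

Context {R : rcfType}.

Lemma mup_scale_prod_XsubC (c x : R) (rs : seq R) : c != 0 ->
  mup x (c *: \prod_(y <- rs) ('X - y%:P)) = count_mem x rs.
Proof.
move=> c_neq0; rewrite -mul_polyC mupM ?polyC_eq0 ?monic_neq0 ?monic_prod_XsubC //.
by rewrite mupNroot ?rootC // mu_prod_XsubC.
Qed.

Lemma num_pos_roots_scale_prod_XsubC (c : R) (rs : seq R) : c != 0 ->
  num_pos_roots (c *: \prod_(y <- rs) ('X - y%:P)) (count (fun x => 0 < x) rs).
Proof.
move=> c_neq0; exists [seq x <- undup rs | 0 < x]; split.
- exact/filter_uniq/undup_uniq.
- by move=> x; rewrite mem_filter mem_undup rootZ // root_prod_XsubC.
- rewrite big_filter -sum1_count -[RHS]big_undup_iterop_count.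
  apply: eq_bigr => x _.
  by rewrite mup_scale_prod_XsubC // Monoid.iteropE iter_addn_0 mul1n.
Qed.

Lemma quadratic_roots_opposite_sign {h : {poly R}} :
  size h = 3%N -> lead_coef h * h.[0] < 0 ->
  exists a b, [/\ b < 0, 0 < a &
    h = lead_coef h *: \prod_(x <- [:: b; a]) ('X - x%:P)].
Proof.
move=> h3; have -> : lead_coef h = h`_2 by rewrite lead_coefE h3.
rewrite horner_coef0 => ac_lt0.
have delta_ge0 : 0 <= h`_1 ^+ 2 - 4 * h`_2 * h`_0.
  have := sqr_ge0 h`_1; lra.
have [r1 [r2 h_eq]] : exists r1 r2, h = h`_2 *: ('X - r1%:P) * ('X - r2%:P).
  by do 2 eexists; exact: Real.deg2_poly_factor h3 delta_ge0.
have c_eq : h`_0 = h`_2 * (r1 * r2).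
  by rewrite -horner_coef0 {1}h_eq hornerM hornerZ !hornerXsubC; ring.
have r12_lt0 : r1 * r2 < 0 by move: ac_lt0; rewrite c_eq; nra.
have [r1_lt0 | r1_ge0] := ltP r1 0.
  exists r2, r1; split; [done | by rewrite -(nmulr_rlt0 _ r1_lt0) |].
  by rewrite big_cons big_seq1 {1}h_eq -scalerAl.
have r2_lt0 : r2 < 0 by nra.
exists r1, r2; split; [done | by rewrite -(nmulr_llt0 _ r2_lt0) |].
by rewrite big_cons big_seq1 {1}h_eq -scalerAl mulrC.
Qed.

Lemma cubic_factor_from_positive_root {p : {poly R}} {g : R} :
  size p = 4%N -> 0 < lead_coef p * p.[0] -> 0 < g -> root p g ->
  exists a b, [/\ b < 0, 0 < a &
    p = lead_coef p *: \prod_(x <- [:: b; a; g]) ('X - x%:P)].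
Proof.
move=> p4 lp0_gt0 g_gt0 /factor_theorem[h p_eq].
have h_neq0 : h != 0.
  by apply: contra_eq_neq p4 => h0; rewrite p_eq h0 mul0r size_poly0.
have lead_h : lead_coef h = lead_coef p.
  by rewrite p_eq lead_coef_Mmonic ?monicXsubC.
have h3 : size h = 3%N.
  by move: p4; rewrite p_eq size_Mmonic ?monicXsubC // size_XsubC addn2 => -[].
have h0_lt0 : lead_coef h * h.[0] < 0.
  by move: lp0_gt0; rewrite lead_h p_eq hornerM hornerXsubC sub0r; nra.
have [a [b [b_lt0 a_gt0 h_eq]]] := quadratic_roots_opposite_sign h3 h0_lt0.
exists a, b; split => //.
by rewrite {1}p_eq h_eq lead_h -scalerAl !big_cons big_nil !mulr1 mulrA.
Qed.

End PositiveRoots.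

Theorem lemma1 (R : rcfType) (rho s eta eps : R) (q : R[i]) :
  (rho = 1 / 2 \/ rho = 1) -> 0 < s -> 0 < eta -> eps < 1 ->
  (exists g : R, 0 < g /\ root (fpoly rho s eta eps q) g) ->
  num_pos_roots (fpoly rho s eta eps q) 2.
Proof.
move=> _ s_gt0 eta_gt0 eps_lt1 [g [g_gt0 root_g]].
have lead_lt0 : - (eta * s ^+ 2) < 0 by rewrite oppr_lt0 mulr_gt0 ?exprn_gt0.
rewrite /fpoly -scaleNr in root_g *.
set p := _ + _%:P in root_g *.
have lead_p : lead_coef p = - (eta * s ^+ 2) by apply/lead_coef_cubic/ltr0_neq0.
have p4 : size p = 4%N by apply/size_cubic/ltr0_neq0.
have lp0_gt0 : 0 < lead_coef p * p.[0].
  by rewrite lead_p horner_cubic0 nmulr_rgt0 // subr_lt0.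
have [a [b [b_lt0 a_gt0 ->]]] :=
  cubic_factor_from_positive_root p4 lp0_gt0 g_gt0 root_g.
have -> : 2%N = count (fun x => 0 < x) [:: b; a; g].
  by rewrite /= ltNge (ltW b_lt0) a_gt0 g_gt0.
by apply/num_pos_roots_scale_prod_XsubC/ltr0_neq0; rewrite lead_p.
Qed.
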